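(* Every absorbing hierarchical generator $\mathcal{H}$ is linearly independent (as a set of functions on $\mathbb{R}^d$).
   Context: Fix integers $d\ge1$, $n\ge2$, $m\ge2$; $s=n-1$, $p=m-1$. B-splines $\varphi^\ell_{\vec i}(\vec x)=\prod_kQ(n^\ell x_k-i_k)$ on $\mathbb{R}^d$ for $\ell\ge0$, $\vec i\in\mathbb{Z}^d$, $Q$ the uniform B-spline of order $m$ with knots $0,\dots,m$; $\mathfrak{B}$ the set of all of them; $\mathcal{B}^0=\{\varphi^0_{\vec i}:\vec i\in[-p:0]^d\}$. Children $\mathrm{ch}(\varphi^\ell_{\vec i})=\{\varphi^{\ell+1}_{\vec k}:n\vec i\le\vec k\le n\vec i+sm\}$, extended to sets by union. Cells $I^\ell_{\vec i}=\prod_k[i_kn^{-\ell},(i_k+1)n^{-\ell})$; cell support $\mathbb{I}(\varphi^\ell_{\vec i})=\{I^\ell_{\vec k}:\vec i\le\vec k\le\vec i+p\}$ (componentwise), extended to sets by union. A lineage is a finite $\mathcal{L}\subset\mathfrak{B}$ with $\mathcal{L}\subset\mathcal{B}^0\cup\mathrm{ch}(\mathcal{L})$; its hierarchical generator is $\mathcal{H}=(\mathcal{B}^0\cup\mathrm{ch}(\mathcal{L}))\setminus\mathcal{L}$. $\mathcal{H}$ is absorbing if there is no $\varphi\in\mathcal{H}$ with $\mathbb{I}(\varphi)\subset\mathbb{I}(\mathcal{L})$. *)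

From Stdlib Require Import Reals ZArith List Lia Lra.
Import ListNotations.
Open Scope R_scope.

(* Uniform (cardinal) B-spline of order k with knots 0,1,...,k:
   order 1: indicator of [0,1);
   order k+1: ((x) B_k(x) + (k+1-x) B_k(x-1)) / k   (Cox--de Boor recursion). *)
Definition ind01 (x : R) : R :=
  if Rle_dec 0 x then (if Rlt_dec x 1 then 1 else 0) else 0.

Fixpoint cbspl (k : nat) (x : R) : R :=
  match k with
  | O => 0
  | S k' =>
      match k' with
      | O => ind01 x
      | S _ => (x * cbspl k' x + (INR k - x) * cbspl k' (x - 1)) / INR k'
      end
  end.

(* A B-spline phi^l_i is represented by its level l and multi-index i in Z^d
   (a list of length d).  The map (l,i) |-> phi^l_i is injective, so sets of
   B-splines are faithfully represented by sets of such indices. *)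
Record bspl := mkB { lev : nat; idx : list Z }.

(* Evaluation: phi^l_i(x) = prod_k Q(n^l x_k - i_k), Q = cbspl m.
   Points of R^d are x : nat -> R, only coordinates 0..d-1 are used. *)
Fixpoint prod_coords (m n l : nat) (x : nat -> R) (i : list Z) (j : nat) : R :=
  match i with
  | [] => 1
  | ik :: i' => cbspl m (INR n ^ l * x j - IZR ik) * prod_coords m n l x i' (S j)
  end.

Definition beval (m n : nat) (phi : bspl) (x : nat -> R) : R :=
  prod_coords m n (lev phi) x (idx phi) 0.

Definition in_box (lo : list Z) (off : Z) (k : list Z) : Prop :=
  length k = length lo /\
  forall j, (j < length lo)%nat ->
    (nth j lo 0 <= nth j k 0 <= nth j lo 0 + off)%Z.

(* B^0 = { phi^0_i : i in [-p:0]^d },  p = m-1 *)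
Definition inB0 (d m : nat) (phi : bspl) : Prop :=
  lev phi = O /\ in_box (repeat (- (Z.of_nat m - 1))%Z d) (Z.of_nat m - 1)%Z (idx phi).

(* child relation: phi^{l+1}_k in ch(phi^l_i)  iff  n i <= k <= n i + s m, s = n-1 *)
Definition is_child (n m : nat) (par ch : bspl) : Prop :=
  lev ch = S (lev par) /\
  in_box (map (Z.mul (Z.of_nat n)) (idx par))
         ((Z.of_nat n - 1) * Z.of_nat m)%Z (idx ch).

(* lineage: finite L (a list) of B-splines on R^d with L subset B^0 u ch(L) *)
Definition lineage (d n m : nat) (L : list bspl) : Prop :=
  (forall phi, In phi L -> length (idx phi) = d) /\
  (forall phi, In phi L -> inB0 d m phi \/ exists psi, In psi L /\ is_child n m psi phi).

(* membership in the hierarchical generator H = (B^0 u ch(L)) \ L *)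
Definition inH (d n m : nat) (L : list bspl) (phi : bspl) : Prop :=
  (inB0 d m phi \/ exists psi, In psi L /\ is_child n m psi phi) /\ ~ In phi L.

(* Cells I^l_k are represented by their index (l,k); this map is injective.
   cell support: II(phi^l_i) = { I^l_k : i <= k <= i + p } *)
Definition cell_of (m : nat) (phi : bspl) (l : nat) (k : list Z) : Prop :=
  l = lev phi /\ in_box (idx phi) (Z.of_nat m - 1)%Z k.

Definition cell_of_set (m : nat) (L : list bspl) (l : nat) (k : list Z) : Prop :=
  exists psi, In psi L /\ cell_of m psi l k.

(* H is absorbing: no phi in H with II(phi) subset II(L) *)
Definition absorbing (d n m : nat) (L : list bspl) : Prop :=
  ~ exists phi, inH d n m L phi /\
      (forall l k, cell_of m phi l k -> cell_of_set m L l k).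

Fixpoint lincomb (m n : nat) (c : bspl -> R) (S : list bspl) (x : nat -> R) : R :=
  match S with
  | [] => 0
  | phi :: S' => c phi * beval m n phi x + lincomb m n c S' x
  end.

(* linear independence of a set of functions (given by a predicate):
   every finite family of distinct members is linearly independent *)
Definition lin_indep (m n : nat) (P : bspl -> Prop) : Prop :=
  forall (S : list bspl) (c : bspl -> R),
    NoDup S -> (forall phi, In phi S -> P phi) ->
    (forall x : nat -> R, lincomb m n c S x = 0) ->
    forall phi, In phi S -> c phi = 0.

(* Induction on the level.  For [phi] in [H] of level [l], with all lower-level
   coefficients already zero, absorption gives a level-[l] cell of [phi] outside
   the cell support of [L].  A finer element of [H] is a child of some element of
   [L] and its support lies in the support of its level-[l] ancestor, so it
   vanishes on that cell; there the combination reduces to level-[l] B-splines,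
   which are linearly independent on a single cell.  In one dimension this
   follows by differentiating and using the partition of unity; in general by
   a tensor-product induction. *)

From Stdlib Require Import Reals ZArith List Lia Lra Classical.
Import ListNotations.
Open Scope R_scope.

Fixpoint nsum (N : nat) (f : nat -> R) : R :=
  match N with O => 0 | S N' => nsum N' f + f N' end.

Lemma nsum_ext N f g : (forall t, (t < N)%nat -> f t = g t) -> nsum N f = nsum N g.
Proof.
  induction N as [|N IH]; intros Hfg; simpl; [reflexivity|].
  rewrite IH, Hfg; [reflexivity|lia|intros; apply Hfg; lia].
Qed.

Lemma nsum_0 N : nsum N (fun _ => 0) = 0.
Proof. induction N as [|N IH]; simpl; [|rewrite IH]; ring. Qed.

Lemma nsum_scal N c f : c * nsum N f = nsum N (fun t => c * f t).
Proof. induction N as [|N IH]; simpl; [|rewrite <- IH]; ring. Qed.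

Lemma nsum_plus N f g : nsum N (fun t => f t + g t) = nsum N f + nsum N g.
Proof. induction N as [|N IH]; simpl; [|rewrite IH]; ring. Qed.

Lemma nsum_indicator N s f :
  nsum N (fun t => if Nat.eq_dec t s then f t else 0) = if lt_dec s N then f s else 0.
Proof.
  induction N as [|N IH]; simpl.
  - destruct (lt_dec s 0); [lia|reflexivity].
  - rewrite IH.
    destruct (Nat.eq_dec N s), (lt_dec s N), (lt_dec s (S N)); subst; try lia; ring.
Qed.

Lemma nsum_shift_regroup N (al be F G : nat -> R) :
  (forall t, G (S t) = F t) ->
  nsum (S N) (fun t => al t * F t + be t * G t) =
  nsum N (fun t => (al t + be (S t)) * F t) + al N * F N + be O * G O.
Proof.
  intros HG. induction N as [|N IH]; [simpl; ring|].
  change (nsum (S (S N)) ?h) with (nsum (S N) h + h (S N)).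
  rewrite IH. simpl. rewrite HG. ring.
Qed.

Definition lsum {X : Type} (T : list X) (f : X -> R) : R :=
  fold_right (fun x s => f x + s) 0 T.

Lemma lsum_ext_in {X} (T : list X) f g :
  (forall x, In x T -> f x = g x) -> lsum T f = lsum T g.
Proof.
  induction T as [|a T IH]; intros Hfg; simpl; [reflexivity|].
  rewrite Hfg, IH; [reflexivity| |left; reflexivity].
  intros x Hx. apply Hfg. right. exact Hx.
Qed.

Lemma lsum_0 {X} (T : list X) : lsum T (fun _ => 0) = 0.
Proof. induction T as [|a T IH]; simpl; [|rewrite IH]; ring. Qed.

Lemma lsum_scal {X} (T : list X) f c : lsum T f * c = lsum T (fun x => c * f x).
Proof. induction T as [|a T IH]; simpl; [|rewrite <- IH]; ring. Qed.

Lemma lsum_nsum {X} (T : list X) N (g : X -> nat -> R) :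
  lsum T (fun x => nsum N (g x)) = nsum N (fun t => lsum T (fun x => g x t)).
Proof.
  induction T as [|a T IH]; simpl; [now rewrite nsum_0|].
  now rewrite IH, <- nsum_plus.
Qed.

Lemma lsum_indicator {X} (eq_dec : forall a b : X, {a = b} + {a <> b})
  (T : list X) (c : X -> R) x0 :
  NoDup T -> In x0 T -> lsum T (fun x => if eq_dec x x0 then c x else 0) = c x0.
Proof.
  induction T as [|a T IH]; intros HT Hin; [destruct Hin|].
  inversion HT as [|? ? Ha HT']; subst. simpl.
  destruct (eq_dec a x0) as [<-|Hne].
  - rewrite (lsum_ext_in T _ (fun _ => 0)), lsum_0; [ring|].
    intros x Hx. destruct (eq_dec x a); [subst; contradiction|reflexivity].
  - destruct Hin as [->|Hin]; [contradiction|]. rewrite IH by assumption. ring.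
Qed.

Lemma cbspl_rec k x : cbspl (S (S k)) x =
  (x * cbspl (S k) x + (INR (S (S k)) - x) * cbspl (S k) (x - 1)) / INR (S k).
Proof. reflexivity. Qed.

Lemma cbspl_out_of_support k x : x < 0 \/ INR k <= x -> cbspl k x = 0.
Proof.
  revert x. induction k as [|[|k] IH]; intros x Hx; [reflexivity| |].
  - simpl in Hx. unfold cbspl, ind01.
    destruct (Rle_dec 0 x), (Rlt_dec x 1); lra.
  - rewrite S_INR in Hx. rewrite cbspl_rec, (IH x), (IH (x - 1)) by lra.
    unfold Rdiv. ring.
Qed.

Lemma cbspl_partition_of_unity N u :
  0 < u < 1 -> nsum (S N) (fun t => cbspl (S N) (u + INR t)) = 1.
Proof.
  intros Hu. induction N as [|N IH].
  - simpl. unfold ind01. destruct (Rle_dec 0 (u + 0)), (Rlt_dec (u + 0) 1); lra.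
  - set (c := INR (S N)).
    assert (Hc : 0 < c) by (apply lt_0_INR; lia).
    rewrite (nsum_ext _ _ (fun t => ((u + INR t) / c) * cbspl (S N) (u + INR t)
        + ((INR (S (S N)) - (u + INR t)) / c) * cbspl (S N) (u + INR t - 1)))
      by (intros t _; rewrite cbspl_rec; fold c; field; lra).
    rewrite nsum_shift_regroup by (intros t; rewrite S_INR; f_equal; ring).
    rewrite (cbspl_out_of_support (S N) (u + INR (S N))) by (right; lra).
    rewrite (cbspl_out_of_support (S N) (u + INR 0 - 1)) by (left; simpl; lra).
    rewrite <- IH, !Rmult_0_r, !Rplus_0_r.
    apply nsum_ext. intros t _.
    replace (INR (S (S N))) with (c + 1) by (unfold c; rewrite (S_INR (S N)); ring).
    rewrite S_INR. field. lra.
Qed.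

Lemma derivable_pt_lim_shift f x c l :
  derivable_pt_lim f (x + c) l -> derivable_pt_lim (fun y => f (y + c)) x l.
Proof.
  intros Df eps Heps. destruct (Df eps Heps) as [del Hdel]. exists del.
  intros h Hh0 Hh. replace (x + h + c) with (x + c + h) by ring. auto.
Qed.

Lemma ind01_derivative u z : 0 < u < 1 -> derivable_pt_lim ind01 (u + IZR z) 0.
Proof.
  intros Hu.
  apply (derivable_pt_lim_locally_ext (fct_cte (ind01 (u + IZR z))) _ _ (IZR z) (IZR z + 1));
    [lra| |apply derivable_pt_lim_const].
  intros y Hy. unfold fct_cte, ind01.
  destruct (Z.lt_trichotomy z 0) as [Hz|[->|Hz]].
  - assert (Hz' : IZR z <= -1) by (apply IZR_le; lia).
    destruct (Rle_dec 0 y), (Rle_dec 0 (u + IZR z)); lra.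
  - destruct (Rle_dec 0 y), (Rle_dec 0 (u + 0)), (Rlt_dec y 1), (Rlt_dec (u + 0) 1); lra.
  - assert (Hz' : 1 <= IZR z) by (apply IZR_le; lia).
    destruct (Rle_dec 0 y), (Rle_dec 0 (u + IZR z)), (Rlt_dec y 1), (Rlt_dec (u + IZR z) 1);
      lra.
Qed.

Lemma cbspl_derivative k u z : 0 < u < 1 ->
  derivable_pt_lim (cbspl (S k)) (u + IZR z)
    (cbspl k (u + IZR z) - cbspl k (u + IZR z - 1)).
Proof.
  intros Hu. revert z. induction k as [|k IH]; intros z.
  - replace (cbspl 0 _ - _) with 0 by (simpl; ring). now apply ind01_derivative.
  - set (x := u + IZR z).
    assert (Dx := IH z). fold x in Dx.
    assert (Dx1 : derivable_pt_lim (fun y => cbspl (S k) (y + -1)) x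
                    (cbspl k (x - 1) - cbspl k (x - 1 - 1))).
    { apply derivable_pt_lim_shift.
      replace (x + -1) with (u + IZR (z - 1)) by (unfold x; rewrite minus_IZR; ring).
      replace (x - 1) with (u + IZR (z - 1)) by (unfold x; rewrite minus_IZR; ring).
      apply IH. }
    apply (derivable_pt_lim_ext
      (fun y => (y * cbspl (S k) y + (INR (S (S k)) - y) * cbspl (S k) (y + -1)) / INR (S k))).
    { intros y. rewrite cbspl_rec. replace (y - 1) with (y + -1) by ring. reflexivity. }
    replace (cbspl (S k) x - cbspl (S k) (x - 1)) with
      ((1 * cbspl (S k) x + x * (cbspl k x - cbspl k (x - 1))
        + ((0 - 1) * cbspl (S k) (x + -1)
           + (INR (S (S k)) - x) * (cbspl k (x - 1) - cbspl k (x - 1 - 1)))) / INR (S k)).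
    + apply derivable_pt_lim_div_scal, derivable_pt_lim_plus.
      * exact (derivable_pt_lim_mult id _ x _ _ (derivable_pt_lim_id x) Dx).
      * apply (derivable_pt_lim_mult (fun y => INR (S (S k)) - y) (fun y => cbspl (S k) (y + -1)));
          [|exact Dx1].
        apply derivable_pt_lim_minus; [apply derivable_pt_lim_const|apply derivable_pt_lim_id].
    + replace (x + -1) with (x - 1) by ring.
      destruct k as [|k].
      * simpl. field.
      * rewrite (cbspl_rec k x), (cbspl_rec k (x - 1)), !S_INR.
        pose proof (pos_INR k). field. lra.
Qed.

Lemma derivable_pt_lim_nsum N (f : nat -> R -> R) (l : nat -> R) x :
  (forall t, (t < N)%nat -> derivable_pt_lim (f t) x (l t)) ->
  derivable_pt_lim (fun y => nsum N (fun t => f t y)) x (nsum N l).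
Proof.
  induction N as [|N IH]; intros Df; simpl; [apply derivable_pt_lim_const|].
  apply (derivable_pt_lim_plus (fun y => nsum N (fun t => f t y)) (f N)); auto.
Qed.

Lemma derivative_of_vanishing g x l :
  (forall y, 0 < y < 1 -> g y = 0) -> 0 < x < 1 -> derivable_pt_lim g x l -> l = 0.
Proof.
  intros Hg Hx Dg. apply (uniqueness_limite g x); [exact Dg|].
  apply (derivable_pt_lim_locally_ext (fct_cte 0) g x 0 1 0 Hx);
    [intros y Hy; rewrite Hg by exact Hy; reflexivity|apply derivable_pt_lim_const].
Qed.

Lemma cbspl_shifts_derivative N (a : nat -> R) u : 0 < u < 1 ->
  derivable_pt_lim (fun y => nsum (S N) (fun t => a t * cbspl (S N) (y + INR t))) u
    (nsum N (fun t => (a t - a (S t)) * cbspl N (u + INR t))).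
Proof.
  intros Hu.
  replace (nsum N _) with
    (nsum (S N) (fun t => a t * (cbspl N (u + INR t) - cbspl N (u + INR t - 1)))).
  - apply derivable_pt_lim_nsum. intros t _.
    apply (derivable_pt_lim_scal (fun y => cbspl (S N) (y + INR t))), derivable_pt_lim_shift.
    rewrite INR_IZR_INZ. now apply cbspl_derivative.
  - rewrite (nsum_ext _ _ (fun t => a t * cbspl N (u + INR t) + - a t * cbspl N (u + INR t - 1)))
      by (intros; ring).
    rewrite nsum_shift_regroup by (intros t; rewrite S_INR; f_equal; ring).
    rewrite (cbspl_out_of_support N (u + INR N)) by (right; lra).
    rewrite (cbspl_out_of_support N (u + INR 0 - 1)) by (left; simpl; lra).
    ring_simplify. apply nsum_ext. intros; ring.
Qed.

(* The shifts of the cardinal B-spline of order [N] are linearly independent on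
   the unit interval: differentiating makes consecutive coefficients equal, and
   the partition of unity then forces them all to vanish. *)
Lemma cbspl_shifts_local_indep N (a : nat -> R) :
  (forall u, 0 < u < 1 -> nsum N (fun t => a t * cbspl N (u + INR t)) = 0) ->
  forall t, (t < N)%nat -> a t = 0.
Proof.
  revert a. induction N as [|N IH]; intros a Ha t Ht; [lia|].
  assert (Hstep : forall s, (s < N)%nat -> a s - a (S s) = 0).
  { apply IH. intros u Hu.
    apply (derivative_of_vanishing _ u _ Ha Hu), cbspl_shifts_derivative, Hu. }
  assert (Hconst : forall s, (s <= N)%nat -> a s = a O).
  { induction s as [|s IHs]; intros Hs; [reflexivity|].
    rewrite <- IHs by lia. specialize (Hstep s ltac:(lia)). lra. }
  specialize (Ha (1/2) ltac:(lra)).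
  rewrite (nsum_ext _ _ (fun s => a O * cbspl (S N) (1/2 + INR s))) in Ha
    by (intros s Hs; rewrite Hconst by lia; reflexivity).
  rewrite <- nsum_scal, cbspl_partition_of_unity in Ha by lra.
  rewrite Hconst by lia. lra.
Qed.

Fixpoint tensor_bspl (m : nat) (i : list Z) (y : nat -> R) : R :=
  match i with
  | [] => 1
  | i0 :: i' => cbspl m (y O - IZR i0) * tensor_bspl m i' (fun j => y (S j))
  end.

Lemma tensor_bspl_ext m i y y' :
  (forall j, (j < length i)%nat -> y j = y' j) -> tensor_bspl m i y = tensor_bspl m i y'.
Proof.
  revert y y'. induction i as [|i0 i IH]; intros y y' Hy; simpl; [reflexivity|].
  rewrite Hy by (simpl; lia). f_equal. apply IH. intros j Hj. apply Hy. simpl; lia.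
Qed.

Definition in_open_cell (k : list Z) (y : nat -> R) : Prop :=
  forall j, (j < length k)%nat -> IZR (nth j k 0%Z) < y j < IZR (nth j k 0%Z) + 1.

Lemma cbspl_on_unit_cell m k0 i0 u : 0 < u < 1 ->
  cbspl m (IZR k0 + u - IZR i0) =
  nsum m (fun t => if Z.eq_dec i0 (k0 - Z.of_nat t) then cbspl m (u + INR t) else 0).
Proof.
  intros Hu.
  destruct (Z_le_dec 0 (k0 - i0)) as [H0|H0];
    [destruct (Z_lt_dec (k0 - i0) (Z.of_nat m)) as [Hm|Hm]|].
  - set (s := Z.to_nat (k0 - i0)).
    rewrite (nsum_ext _ _ (fun t => if Nat.eq_dec t s then cbspl m (u + INR t) else 0)).
    + rewrite nsum_indicator. destruct (lt_dec s m) as [_|Hs]; [|unfold s in Hs; lia].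
      unfold s. rewrite INR_IZR_INZ, Z2Nat.id, minus_IZR by lia. f_equal. ring.
    + intros t _. unfold s.
      destruct (Z.eq_dec i0 (k0 - Z.of_nat t)), (Nat.eq_dec t (Z.to_nat (k0 - i0)));
        lia || reflexivity.
  - rewrite (nsum_ext _ _ (fun _ => 0)), nsum_0.
    + apply cbspl_out_of_support. right.
      assert (Hle : IZR (Z.of_nat m) <= IZR (k0 - i0)) by (apply IZR_le; lia).
      rewrite <- INR_IZR_INZ, minus_IZR in Hle. lra.
    + intros t Ht. destruct (Z.eq_dec i0 (k0 - Z.of_nat t)); lia || reflexivity.
  - rewrite (nsum_ext _ _ (fun _ => 0)), nsum_0.
    + apply cbspl_out_of_support. left.
      assert (Hle : IZR (k0 - i0) <= -1) by (apply IZR_le; lia).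
      rewrite minus_IZR in Hle. lra.
    + intros t Ht. destruct (Z.eq_dec i0 (k0 - Z.of_nat t)); lia || reflexivity.
Qed.

Lemma in_open_cell_cons k0 k y :
  in_open_cell (k0 :: k) y <->
  IZR k0 < y O < IZR k0 + 1 /\ in_open_cell k (fun j => y (S j)).
Proof.
  split.
  - intros Hy. split; [apply (Hy O); simpl; lia|].
    intros j Hj. apply (Hy (S j)). simpl; lia.
  - intros [Hy0 Hy] [|j] Hj; [exact Hy0|]. apply Hy. simpl in Hj; lia.
Qed.

Lemma in_box_cons i0 i off k0 k :
  in_box (i0 :: i) off (k0 :: k) <->
  (i0 <= k0 <= i0 + off)%Z /\ in_box i off k.
Proof.
  split.
  - intros [Hlen Hb]. simpl in Hlen. split; [apply (Hb O); simpl; lia|].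
    split; [lia|]. intros j Hj. apply (Hb (S j)). simpl; lia.
  - intros [Hb0 [Hlen Hb]]. split; [simpl; lia|].
    intros [|j] Hj; [exact Hb0|]. apply Hb. simpl in Hj; lia.
Qed.

(* Tensor-product version of [cbspl_shifts_local_indep], by induction on the
   dimension: on a cell the first factor is a combination of shifts of one
   cardinal B-spline, whose coefficients must vanish. *)
Lemma tensor_bspl_local_indep m (X : Type) (T : list X) (iota : X -> list Z) (a : X -> R) k :
  (forall x, In x T -> length (iota x) = length k) ->
  (forall y, in_open_cell k y -> lsum T (fun x => a x * tensor_bspl m (iota x) y) = 0) ->
  forall i, in_box i (Z.of_nat m - 1) k ->
  lsum T (fun x => if list_eq_dec Z.eq_dec (iota x) i then a x else 0) = 0.
Proof.
  revert iota a. induction k as [|k0 k IH]; intros iota a Hlen Hsum i Hi.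
  - destruct i as [|? ?]; [|destruct Hi as [Hi _]; discriminate].
    rewrite <- (Hsum (fun _ => 0)) by (intros j Hj; simpl in Hj; lia).
    apply lsum_ext_in. intros x Hx.
    destruct (iota x) eqn:E; [|specialize (Hlen x Hx); rewrite E in Hlen; discriminate].
    simpl. ring.
  - destruct i as [|i0 i]; [destruct Hi as [Hi _]; discriminate|].
    apply in_box_cons in Hi as [Hi0 Hi].
    set (b t x := if Z.eq_dec (hd 0%Z (iota x)) (k0 - Z.of_nat t) then a x else 0).
    assert (Hb : forall y, in_open_cell k y -> forall t, (t < m)%nat ->
              lsum T (fun x => b t x * tensor_bspl m (tl (iota x)) y) = 0).
    { intros y Hy. apply cbspl_shifts_local_indep. intros u Hu.
      rewrite <- (Hsum (fun j => match j with O => IZR k0 + u | S j => y j end))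
        by (apply in_open_cell_cons; split; [lra|exact Hy]).
      rewrite (nsum_ext _ _ (fun t => lsum T (fun x =>
                 cbspl m (u + INR t) * (b t x * tensor_bspl m (tl (iota x)) y))))
        by (intros; apply lsum_scal).
      rewrite <- lsum_nsum. apply lsum_ext_in. intros x Hx.
      specialize (Hlen x Hx).
      destruct (iota x) as [|j0 j] eqn:E; [discriminate|]. simpl.
      change (tensor_bspl m j (fun j1 => y j1)) with (tensor_bspl m j y).
      rewrite cbspl_on_unit_cell by exact Hu.
      replace (a x * _) with (a x * tensor_bspl m j y * nsum m (fun t =>
        if Z.eq_dec j0 (k0 - Z.of_nat t) then cbspl m (u + INR t) else 0)) by ring.
      rewrite nsum_scal.
      apply nsum_ext. intros t _. unfold b. rewrite E. simpl.
      destruct (Z.eq_dec j0 (k0 - Z.of_nat t)); ring. }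
    set (t := Z.to_nat (k0 - i0)).
    assert (Ht : (t < m)%nat) by (unfold t; lia).
    transitivity (lsum T (fun x => if list_eq_dec Z.eq_dec (tl (iota x)) i then b t x else 0)).
    + apply lsum_ext_in. intros x Hx. specialize (Hlen x Hx).
      unfold b. destruct (iota x) as [|j0 j]; [discriminate|]. cbn [hd tl].
      replace (k0 - Z.of_nat t)%Z with i0 by (unfold t; lia).
      destruct (list_eq_dec Z.eq_dec (j0 :: j) (i0 :: i)), (list_eq_dec Z.eq_dec j i),
        (Z.eq_dec j0 i0); congruence || reflexivity.
    + apply IH; [|intros y Hy; exact (Hb y Hy t Ht)|exact Hi].
      intros x Hx. specialize (Hlen x Hx). destruct (iota x); simpl in *; lia.
Qed.

Definition scaled (n l : nat) (x : nat -> R) : nat -> R := fun j => INR n ^ l * x j.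

Lemma beval_tensor m n psi x :
  beval m n psi x = tensor_bspl m (idx psi) (scaled n (lev psi) x).
Proof.
  assert (Hshift : forall i j0, prod_coords m n (lev psi) x i j0 =
            tensor_bspl m i (fun j => INR n ^ lev psi * x (j + j0)%nat)).
  { induction i as [|i0 i IH]; intros j0; simpl; [reflexivity|].
    rewrite IH. f_equal. apply tensor_bspl_ext. intros j _. now rewrite Nat.add_succ_r. }
  unfold beval. rewrite Hshift. apply tensor_bspl_ext. intros j _. now rewrite Nat.add_0_r.
Qed.

Definition in_support_box (m : nat) (i : list Z) (y : nat -> R) : Prop :=
  forall j, (j < length i)%nat -> IZR (nth j i 0%Z) <= y j < IZR (nth j i 0%Z) + INR m.

Lemma tensor_bspl_support m i y : tensor_bspl m i y <> 0 -> in_support_box m i y.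
Proof.
  revert y. induction i as [|i0 i IH]; intros y Hy j Hj; simpl in Hj; [lia|].
  simpl in Hy. apply Rmult_neq_0_reg in Hy as [Hy0 Hy].
  destruct j as [|j]; simpl.
  - destruct (Rlt_le_dec (y O - IZR i0) 0) as [Hlo|Hlo];
      [exfalso; apply Hy0, cbspl_out_of_support; left; exact Hlo|].
    destruct (Rlt_le_dec (y O - IZR i0) (INR m)) as [Hhi|Hhi];
      [lra|exfalso; apply Hy0, cbspl_out_of_support; right; exact Hhi].
  - apply (IH _ Hy j). lia.
Qed.

Lemma nth_map_mul a l j : nth j (map (Z.mul a) l) 0%Z = (a * nth j l 0)%Z.
Proof. revert j; induction l; intros [|j]; simpl; auto; lia. Qed.

Lemma in_support_box_parent n m rho psi x : (1 <= n)%nat -> is_child n m rho psi ->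
  in_support_box m (idx psi) (scaled n (lev psi) x) ->
  in_support_box m (idx rho) (scaled n (lev rho) x).
Proof.
  intros Hn [Hl [Hlen Hb]] Hpsi j Hj. rewrite length_map in Hlen, Hb.
  specialize (Hpsi j ltac:(lia)). specialize (Hb j Hj).
  rewrite nth_map_mul in Hb. rewrite Hl in Hpsi. unfold scaled in *. simpl in Hpsi.
  destruct Hb as [Hb1 Hb2]. apply IZR_le in Hb1, Hb2.
  rewrite mult_IZR, <- INR_IZR_INZ in Hb1.
  rewrite plus_IZR, !mult_IZR, minus_IZR, <- !INR_IZR_INZ in Hb2.
  assert (HN : 1 <= INR n) by (apply (le_INR 1); exact Hn).
  assert (Hm : 0 <= INR m) by apply pos_INR. simpl in Hb2.
  set (y := INR n ^ lev rho * x j) in *.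
  replace (INR n * INR n ^ lev rho * x j) with (INR n * y) in Hpsi by (unfold y; ring).
  split; nra.
Qed.

Lemma lineage_ancestor_support d n m L x l rho : (1 <= n)%nat -> lineage d n m L ->
  In rho L -> (l <= lev rho)%nat -> in_support_box m (idx rho) (scaled n (lev rho) x) ->
  exists sigma, In sigma L /\ lev sigma = l /\ in_support_box m (idx sigma) (scaled n l x).
Proof.
  intros Hn [_ HL]. remember (lev rho - l)%nat as r eqn:Er.
  revert rho Er. induction r as [|r IH]; intros rho Er Hrho Hl Hbox.
  - exists rho. replace l with (lev rho) by lia. auto.
  - destruct (HL rho Hrho) as [[H0 _]|[rho' [Hrho' Hc]]]; [lia|].
    pose proof Hc as [Hlev _].
    apply (IH rho'); [lia|assumption|lia|].
    exact (in_support_box_parent n m rho' rho x Hn Hc Hbox).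
Qed.

Lemma in_box_of_open_cell m i k y : length k = length i ->
  in_open_cell k y -> in_support_box m i y -> in_box i (Z.of_nat m - 1) k.
Proof.
  intros Hlen Hk Hi. split; [exact Hlen|]. intros j Hj.
  specialize (Hk j ltac:(lia)). specialize (Hi j Hj).
  rewrite INR_IZR_INZ in Hi.
  assert (Hlo : IZR (nth j i 0%Z) < IZR (nth j k 0%Z + 1)) by (rewrite plus_IZR; lra).
  assert (Hhi : IZR (nth j k 0%Z) < IZR (nth j i 0%Z + Z.of_nat m)) by (rewrite plus_IZR; lra).
  apply lt_IZR in Hlo, Hhi. lia.
Qed.

Lemma inH_length d n m L psi : lineage d n m L -> inH d n m L psi -> length (idx psi) = d.
Proof.
  intros [HL _] [[[_ [Hb _]]|[rho [Hrho [_ [Hb _]]]]] _].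
  - now rewrite Hb, repeat_length.
  - rewrite Hb, length_map. auto.
Qed.

Lemma absorbing_uncovered_cell d n m L phi : absorbing d n m L -> inH d n m L phi ->
  exists k, in_box (idx phi) (Z.of_nat m - 1) k /\ ~ cell_of_set m L (lev phi) k.
Proof.
  intros Habs Hphi. apply NNPP. intros Hnone. apply Habs.
  exists phi. split; [exact Hphi|]. intros l k [-> Hk].
  apply NNPP. intros Hunc. apply Hnone. eauto.
Qed.

Lemma finer_bspl_vanish_off_lineage d n m L psi l k x : (1 <= n)%nat ->
  lineage d n m L -> inH d n m L psi -> (l < lev psi)%nat -> length k = d ->
  ~ cell_of_set m L l k -> in_open_cell k (scaled n l x) -> beval m n psi x = 0.
Proof.
  intros Hn Hlin [[[H0 _]|[rho [Hrho Hc]]] _] Hl Hk Hunc Hx; [lia|].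
  destruct (Req_dec (beval m n psi x) 0) as [|Hne]; [assumption|exfalso].
  rewrite beval_tensor in Hne. apply tensor_bspl_support in Hne.
  pose proof Hc as [Hlev _].
  destruct (lineage_ancestor_support d n m L x l rho Hn Hlin Hrho ltac:(lia)
              (in_support_box_parent n m rho psi x Hn Hc Hne)) as [sigma [Hsigma [Hls Hbox]]].
  apply Hunc. exists sigma. split; [exact Hsigma|]. split; [congruence|].
  apply (in_box_of_open_cell m (idx sigma) k (scaled n l x)); [|exact Hx|exact Hbox].
  destruct Hlin as [HL _]. rewrite HL; auto.
Qed.

Lemma lincomb_lsum m n c S x : lincomb m n c S x = lsum S (fun psi => c psi * beval m n psi x).
Proof. induction S as [|psi S IH]; simpl; [reflexivity|]. now rewrite IH. Qed.

Lemma lincomb_on_uncovered_cell d n m L S c l k : (1 <= n)%nat ->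
  lineage d n m L -> (forall psi, In psi S -> inH d n m L psi) ->
  (forall x, lincomb m n c S x = 0) ->
  (forall psi, In psi S -> (lev psi < l)%nat -> c psi = 0) ->
  length k = d -> ~ cell_of_set m L l k ->
  forall y, in_open_cell k y ->
  lsum S (fun psi => (if Nat.eq_dec (lev psi) l then c psi else 0) * tensor_bspl m (idx psi) y)
  = 0.
Proof.
  intros Hn Hlin HSH Hzero Hcoarse Hk Hunc y Hy.
  set (x j := y j / INR n ^ l).
  assert (Hscaled : forall j, scaled n l x j = y j).
  { intros j. unfold scaled, x. field. apply pow_nonzero, not_0_INR. lia. }
  transitivity (lincomb m n c S x); [|apply Hzero].
  rewrite lincomb_lsum. apply lsum_ext_in. intros psi Hpsi.
  destruct (Nat.eq_dec (lev psi) l) as [Hl|Hl].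
  - rewrite beval_tensor, Hl. f_equal. apply tensor_bspl_ext. intros j _. now rewrite Hscaled.
  - destruct (Nat.lt_ge_cases (lev psi) l) as [Hlt|Hge].
    + rewrite (Hcoarse psi Hpsi Hlt). ring.
    + rewrite (finer_bspl_vanish_off_lineage d n m L psi l k x Hn Hlin (HSH psi Hpsi));
        [ring|lia|exact Hk|exact Hunc|].
      intros j Hj. rewrite Hscaled. exact (Hy j Hj).
Qed.

Lemma bspl_eq_dec (a b : bspl) : {a = b} + {a <> b}.
Proof. decide equality; [apply (list_eq_dec Z.eq_dec)|apply Nat.eq_dec]. Qed.

Theorem lemma6p7 (d n m : nat) (L : list bspl) :
  (1 <= d)%nat -> (2 <= n)%nat -> (2 <= m)%nat ->
  lineage d n m L ->
  absorbing d n m L ->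
  lin_indep m n (inH d n m L).
Proof.
  intros _ Hn _ Hlin Habs S c HS HSH Hzero.
  enough (Hlev : forall l phi, In phi S -> lev phi = l -> c phi = 0) by eauto.
  induction l as [l IH] using lt_wf_ind. intros phi Hphi <-.
  destruct (absorbing_uncovered_cell d n m L phi Habs (HSH phi Hphi)) as [k [Hbox Hunc]].
  assert (Hk : length k = d)
    by (destruct Hbox as [-> _]; exact (inH_length d n m L phi Hlin (HSH phi Hphi))).
  set (a psi := if Nat.eq_dec (lev psi) (lev phi) then c psi else 0).
  assert (Hcell := lincomb_on_uncovered_cell d n m L S c (lev phi) k ltac:(lia)
                     Hlin HSH Hzero (fun psi Hpsi Hlt => IH _ Hlt psi Hpsi eq_refl) Hk Hunc).
  rewrite <- (lsum_indicator bspl_eq_dec S c phi HS Hphi).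
  transitivity (lsum S (fun psi => if list_eq_dec Z.eq_dec (idx psi) (idx phi) then a psi else 0)).
  - apply lsum_ext_in. intros [l i] _. unfold a. destruct phi as [l0 i0]. simpl.
    destruct (bspl_eq_dec (mkB l i) (mkB l0 i0)), (list_eq_dec Z.eq_dec i i0), (Nat.eq_dec l l0);
      congruence.
  - apply (tensor_bspl_local_indep m bspl S idx a k); [|exact Hcell|exact Hbox].
    intros psi Hpsi. rewrite Hk. exact (inH_length d n m L psi Hlin (HSH psi Hpsi)).
Qed.
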